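(* The map $G$ is strongly transitive on $(\mathcal{X},d)$: for all $x,y\in\mathcal{X}$ and every $r>0$ there exist $z\in\mathcal{X}$ with $d(z,x)\le r$ and $n\in\mathbb{N}^*$ such that $G^n(z)=y$.
   Context: Fix an integer $\mathsf{N}\ge 1$ and write $\llbracket a;b\rrbracket=\{a,a+1,\dots,b\}$. Let $f:\mathbb{Z}/4\mathbb{Z}\to\mathbb{Z}/4\mathbb{Z}$, $f(x)=x+1 \pmod 4$, with $f^{-1}(x)=x-1\pmod 4$ and $f^0=\mathrm{id}$. Let $\mathrm{sign}(x)=1$ if $x>0$, $0$ if $x=0$, $-1$ if $x<0$. For $k\in\llbracket -\mathsf{N};\mathsf{N}\rrbracket$ define $f_k:(\mathbb{Z}/4\mathbb{Z})^{\mathsf{N}}\to(\mathbb{Z}/4\mathbb{Z})^{\mathsf{N}}$ by $f_k(C_1,\dots,C_{\mathsf{N}})=(C_1,\dots,C_{|k|-1},f^{\mathrm{sign}(k)}(C_{|k|}),\dots,f^{\mathrm{sign}(k)}(C_{\mathsf{N}}))$ (so $f_0$ is the identity). Folding sequences are $F=(F^j)_{j\in\mathbb{N}}\in\llbracket -\mathsf{N};\mathsf{N}\rrbracket^{\mathbb{N}}$; let $i(F)=F^0$ and let $\sigma$ be the shift, $\sigma((F^j)_{j})=(F^{j+1})_{j}$. A finite sequence $(k_1,\dots,k_n)$ is identified with $(k_1,\dots,k_n,0,0,\dots)$. On $\check{\mathcal{X}}=(\mathbb{Z}/4\mathbb{Z})^{\mathsf{N}}\times\llbracket -\mathsf{N};\mathsf{N}\rrbracket^{\mathbb{N}}$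 define $G((C,F))=(f_{i(F)}(C),\sigma(F))$. SAW requirement: for $C\in(\mathbb{Z}/4\mathbb{Z})^{\mathsf{N}}$ let $p(C)=(X_0,\dots,X_{\mathsf{N}})\in(\mathbb{Z}^2)^{\mathsf{N}+1}$ with $X_0=(0,0)$ and $X_i=X_{i-1}+v(C_i)$, where $v(0)=(1,0)$, $v(1)=(0,-1)$, $v(2)=(-1,0)$, $v(3)=(0,1)$. $C$ satisfies the SAW requirement iff the points $X_0,\dots,X_{\mathsf{N}}$ are pairwise distinct. Let $\mathfrak{C}_{\mathsf{N}}$ be the set of $C\in(\mathbb{Z}/4\mathbb{Z})^{\mathsf{N}}$ for which there exist $n\ge1$ and $k_1,\dots,k_n\in\llbracket -\mathsf{N};\mathsf{N}\rrbracket$ such that $C$ is the first component of $G^n(((0,\dots,0),(k_1,\dots,k_n)))$ and, for every $i\le n$, the first component of $G^i(((0,\dots,0),(k_1,\dots,k_n)))$ satisfies the SAW requirement. Let $\mathcal{X}=\mathfrak{C}_{\mathsf{N}}\times\llbracket -\mathsf{N};\mathsf{N}\rrbracket^{\mathbb{N}}$ with metric $d((C,F),(\check C,\check F))=d_C(C,\check C)+d_F(F,\check F)$, where $d_C(C,\check C)=\sum_{k=1}^{\mathsf{N}}\delta(C_k,\check C_k)2^{\mathsf{N}-k}$ ($\delta(a,b)=0$ if $a=b$, $1$ otherwise) and $d_F(F,\check F)=\frac{9}{2\mathsf{N}}\sum_{k=0}^{\infty}\frac{|F^k-\check F^k|}{10^{k+1}}$. The paper regards $G$ as a self-map of $\mathcal{X}$.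 *)

From HB Require Import structures.
From mathcomp Require Import all_boot all_order all_algebra.
From mathcomp Require Import all_classical all_reals all_analysis.
From Stdlib Require Rdefinitions.
From mathcomp Require Import Rstruct Rstruct_topology.
Notation R := Rdefinitions.R.
Set Implicit Arguments. Unset Strict Implicit. Unset Printing Implicit Defensive.
Import Order.TTheory GRing.Theory Num.Theory.
Local Open Scope ring_scope.

(* Z/4Z is represented by 'I_4; f = ordS (x+1 mod 4), f^{-1} = ord_pred. *)
Definition fpow_sign (k : int) (x : 'I_4) : 'I_4 :=
  if 0 < k then ordS x else if k < 0 then ord_pred x else x.

(* configurations C = (C_1,...,C_N) : index i : 'I_N stands for C_{i+1} *)
Definition config (N : nat) := {ffun 'I_N -> 'I_4}.

(* f_k : modifies C_{|k|},...,C_N (all entries if k = 0, by the identity) *)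
Definition fk (N : nat) (k : int) (C : config N) : config N :=
  [ffun i : 'I_N => if (`|k|%N <= i.+1)%N then fpow_sign k (C i) else C i].

Definition fold_seq := nat -> int.

(* finite sequence (k_1,...,k_n) identified with (k_1,...,k_n,0,0,...) *)
Definition fseq (ks : seq int) : fold_seq := fun j => nth 0 ks j.

Definition state (N : nat) := (config N * fold_seq)%type.

Definition G (N : nat) (x : state N) : state N :=
  (fk (x.2 0%N) x.1, fun j => x.2 j.+1).

Definition vx (c : 'I_4) : int :=
  match val c with 0%N => 1 | 2%N => -1 | _ => 0 end.
Definition vy (c : 'I_4) : int :=
  match val c with 1%N => -1 | 3%N => 1 | _ => 0 end.

Definition pos (N : nat) (C : config N) (i : 'I_N.+1) : int * int :=
  (\sum_(j : 'I_N | (j < i)%N) vx (C j), \sum_(j : 'I_N | (j < i)%N) vy (C j)).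

Definition SAW (N : nat) (C : config N) : Prop :=
  forall i j : 'I_N.+1, pos C i = pos C j -> i = j.

Definition zero_config (N : nat) : config N := [ffun => ord0].

Definition valid_index (N : nat) (k : int) : Prop := (`|k|%N <= N)%N.

Definition frakC (N : nat) (C : config N) : Prop :=
  exists ks : seq int,
    (1 <= size ks)%N /\ (forall k, k \in ks -> valid_index N k) /\
    C = (iter (size ks) (@G N) (zero_config N, fseq ks)).1 /\
    (forall i, (1 <= i <= size ks)%N ->
        SAW (iter i (@G N) (zero_config N, fseq ks)).1).

Definition inX (N : nat) (x : state N) : Prop :=
  frakC x.1 /\ forall j, valid_index N (x.2 j).

Definition d_C (N : nat) (C C' : config N) : R :=
  \sum_(i : 'I_N) ((C i != C' i)%:R * 2 ^+ (N - i.+1)).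

Definition d_F (N : nat) (F F' : fold_seq) : R :=
  9 / (2 * N%:R) *
  limn (series (fun k : nat => `|(F k - F' k)%:~R : R| / 10 ^+ k.+1)).

Definition dist (N : nat) (x y : state N) : R :=
  d_C x.1 y.1 + d_F N x.2 y.2.

(* Two facts make every point reach every other one from arbitrarily close by.
   First, the folds [f_k] with [k > 0] act transitively on configurations:
   [f_{p+1}] rotates the directions [C_{p+1}, ..., C_N] and fixes the earlier
   ones, so the directions can be adjusted one after the other, from the first
   to the last.  Second, two folding sequences that agree on their first [m]
   terms are at [d_F]-distance at most [10^-m].  Given [x = (C, F)] and
   [y = (D, F')], let [z] keep the configuration [C] and start with [m] terms
   of [F], followed by folds turning the resulting configuration into [D],
   followed by [F'].  The SAW requirement never intervenes: [z] has the
   configuration of [x], and membership in [X] only constrains the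
   configuration of a point, not those of its iterates. *)
From HB Require Import structures.
From mathcomp Require Import all_boot all_order all_algebra.
From mathcomp Require Import all_classical all_reals all_analysis.
From mathcomp Require Import Rstruct Rstruct_topology.
From mathcomp Require Import ring.
Import Order.TTheory GRing.Theory Num.Theory numFieldNormedType.Exports.
Set Implicit Arguments. Unset Strict Implicit.
Local Open Scope ring_scope.

Lemma iter_ordS_val n a (u : 'I_n) : val (iter a (@ordS n) u) = ((u + a) %% n)%N.
Proof.
elim: a => [|a IH] /=; first by rewrite addn0 modn_small.
by rewrite IH addnS -addn1 modnDml addn1.
Qed.

Lemma iter_ordS_onto n (u v : 'I_n) : exists a, iter a (@ordS n) u = v.
Proof.
exists (n - u + v)%N; apply/val_inj; rewrite iter_ordS_val addnA subnKC.
  by rewrite modnDl modn_small.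
exact: ltnW.
Qed.

Definition fk_seq N (C : config N) (ks : seq int) : config N :=
  foldl (fun C k => fk k C) C ks.

Lemma fk_seq_nseq N (C : config N) a p (j : 'I_N) :
  fk_seq C (nseq a (Posz p.+1)) j =
  if (p <= j)%N then iter a (@ordS 4) (C j) else C j.
Proof.
elim: a C => [|a IH] C /=; first by case: ifP.
rewrite IH /fk ffunE /= ltnS /fpow_sign /=.
by case: (p <= j)%N => //; rewrite -iterSr.
Qed.

Lemma fk_seq_onto N (C D : config N) :
  exists2 ks : seq int, {in ks, forall k, valid_index N k} & fk_seq C ks = D.
Proof.
suff prefix_onto p : (p <= N)%N -> exists2 ks : seq int,
    {in ks, forall k, valid_index N k} &
    forall j : 'I_N, (j < p)%N -> fk_seq C ks j = D j.
  have [ks valid_ks eq_ks] := prefix_onto N (leqnn N).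
  by exists ks => //; apply/ffunP => j; rewrite eq_ks.
elim: p => [|p IH] lt_pN; first by exists [::].
have [ks valid_ks eq_ks] := IH (ltnW lt_pN).
pose p_ := Ordinal lt_pN.
have [a rot_a] := iter_ordS_onto (fk_seq C ks p_) (D p_).
exists (ks ++ nseq a (Posz p.+1)).
  by move=> k; rewrite mem_cat => /orP[/valid_ks // | /nseqP[-> _]].
move=> j lt_jSp; rewrite /fk_seq foldl_cat -/(fk_seq C ks) fk_seq_nseq.
have [le_pj | lt_jp] := leqP p j; last exact: eq_ks.
suff -> : j = p_ by [].
by apply/val_inj/eqP; rewrite /= eqn_leq le_pj -ltnS lt_jSp.
Qed.

Definition fold_cat (ks : seq int) (F : fold_seq) : fold_seq :=
  fun j => if (j < size ks)%N then nth 0 ks j else F (j - size ks)%N.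

Lemma fold_cat_nth ks F j : (j < size ks)%N -> fold_cat ks F j = nth 0 ks j.
Proof. by rewrite /fold_cat => ->. Qed.

Lemma fold_cat_valid N ks F :
  {in ks, forall k, valid_index N k} -> (forall j, valid_index N (F j)) ->
  forall j, valid_index N (fold_cat ks F j).
Proof.
move=> valid_ks valid_F j; rewrite /fold_cat.
by case: ifP => // lt_j; apply/valid_ks/mem_nth.
Qed.

Lemma iter_G_fold_cat N (C : config N) ks F :
  iter (size ks) (@G N) (C, fold_cat ks F) = (fk_seq C ks, F).
Proof.
elim: ks C => [|k ks IH] C.
  by congr pair; apply: funext => j; rewrite /fold_cat subn0.
by rewrite iterSr -IH; congr (iter _ _ (_, _)); apply: funext => j.
Qed.

Lemma d_C_refl N (C : config N) : d_C C C = 0.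
Proof. by rewrite /d_C big1 // => i _; rewrite eqxx mul0r. Qed.

Lemma limn_series_le_telescope (K : realType) (u g : K ^nat) :
  (forall k, 0 <= u k) -> (forall k, 0 <= g k) ->
  (forall k, u k <= g k - g k.+1) -> limn (series u) <= g 0%N.
Proof.
move=> u_ge0 g_ge0 u_le.
have series_le n : series u n <= g 0%N.
  have telescope : \sum_(0 <= k < n) (g k - g k.+1) = g 0%N - g n.
    rewrite -opprB -telescope_sumr // -sumrN.
    by apply: eq_bigr => k _; rewrite opprB.
  apply: le_trans (_ : _ <= g 0%N - g n) _; last by rewrite gerBl.
  by rewrite -telescope; apply: ler_sum.
have cvg_u : cvgn (series u).
  apply: nondecreasing_is_cvgn; first exact: nondecreasing_series.
  by exists (g 0%N) => _ [n _ <-].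
by apply: limr_le => //; near=> n.
Unshelve. all: by end_near. Qed.

Lemma fold_dist_le (K : numDomainType) N (a b : int) :
  valid_index N a -> valid_index N b -> `|(a - b)%:~R : K| <= (2 * N)%:R.
Proof.
move=> valid_a valid_b; rewrite -intr_norm -[X in _ <= X]/((2 * N)%:Z%:~R) ler_int.
apply: le_trans (ler_normB _ _) _.
by rewrite mul2n -addnn PoszD lerD // -abszE lez_nat.
Qed.

Lemma d_F_le N (F F' : fold_seq) m : (0 < N)%N ->
  (forall j, valid_index N (F j)) -> (forall j, valid_index N (F' j)) ->
  (forall j, (j < m)%N -> F j = F' j) -> d_F N F F' <= (10 ^+ m)^-1.
Proof.
move=> N_gt0 valid_F valid_F' eq_Fm.
pose c : R := (2 * N)%:R.
have c_gt0 : 0 < c by rewrite ltr0n muln_gt0.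
(* [g k - g k.+1] is [0] for [k < m] and [c / 10^(k+1)] otherwise *)
pose g k : R := c / 9 / 10 ^+ maxn k m.
rewrite /d_F; set u := fun k : nat => _.
have u_ge0 k : 0 <= u k by rewrite divr_ge0 // exprn_ge0.
have g_ge0 k : 0 <= g k by rewrite !divr_ge0 // ltW.
have u_le k : u k <= g k - g k.+1.
  rewrite /g; have [lt_km | le_mk] := ltnP k m.
    by rewrite (maxn_idPr lt_km) subrr /u eq_Fm // subrr normr0 mul0r.
  rewrite (maxn_idPl (leqW le_mk)).
  have -> : c / 9 / 10 ^+ k - c / 9 / 10 ^+ k.+1 = c / 10 ^+ k.+1.
    by rewrite exprS; field; rewrite expf_neq0 // pnatr_eq0.
  by rewrite ler_wpM2r ?invr_ge0 ?exprn_ge0 ?fold_dist_le.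
apply: le_trans (ler_wpM2l _ (limn_series_le_telescope u_ge0 g_ge0 u_le)) _.
  by rewrite divr_ge0 // mulr_ge0 // ler0n.
suff -> : 9 / (2 * N%:R) * g 0%N = (10 ^+ m)^-1 by [].
by rewrite /g max0n /c natrM; field; rewrite expf_neq0 // pnatr_eq0 -lt0n.
Qed.

Theorem mainTheorem4 (N : nat) (hN : (1 <= N)%N) (x y : state N)
    (hx : inX x) (hy : inX y) (r : R) (hr : 0 < r) :
  exists z : state N, inX z /\ dist z x <= r /\
    exists n : nat, (0 < n)%N /\ iter n (@G N) z = y.
Proof.
case: x hx => C F [frakC_C valid_F]; case: y hy => D F' [_ valid_F'].
have [m le_r] : exists m, (10 ^+ m.+1)^-1 <= r.
  exists (Num.bound r^-1); rewrite invf_ple ?posrE ?exprn_gt0 //.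
  apply: ltW; apply: lt_le_trans (upper_nthrootP (leqnSn _)) _.
  by rewrite ler_pXn2r ?nnegrE ?ler0n ?ler_nat.
pose pre := mkseq F m.+1.
have [ks valid_ks fold_ks] := fk_seq_onto (fk_seq C pre) D.
have valid_cat : {in pre ++ ks, forall k, valid_index N k}.
  by move=> k; rewrite mem_cat => /orP[/mapP[j _ ->] | /valid_ks].
exists (C, fold_cat (pre ++ ks) F'); split; [|split].
- by split=> //; apply: fold_cat_valid.
- rewrite /dist d_C_refl add0r; apply: le_trans le_r.
  apply: (@d_F_le _ (fold_cat (pre ++ ks) F')) => //; first exact: fold_cat_valid.
  move=> j lt_jm; rewrite fold_cat_nth ?size_cat ?size_mkseq ?ltn_addr //.
  by rewrite nth_cat size_mkseq lt_jm nth_mkseq.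
- exists (size (pre ++ ks)); split; first by rewrite size_cat size_mkseq.
  by rewrite iter_G_fold_cat -fold_ks /fk_seq foldl_cat.
Qed.
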